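(* In the Gaussian sequential learning model with binary states described in the context, for any privacy budget $\varepsilon\in(0,\infty)$, asymptotic learning occurs under the smooth randomized response strategy, i.e., $\lim_{n\to\infty}\mathbb{P}(a_n=\theta)=1$.
   Context: Gaussian model: unknown state $\theta\in\{-1,+1\}$ with uniform prior; agents $n=1,2,\dots$ act in sequence; agent $n$ privately observes $s_n\sim\mathcal{N}(\theta,\sigma^2)$, i.i.d. given $\theta$, $\sigma>0$. The public log-likelihood ratio is $l_n=\log\frac{\mathbb{P}(\theta=+1\mid x_1,\dots,x_{n-1})}{\mathbb{P}(\theta=-1\mid x_1,\dots,x_{n-1})}$ ($l_1=0$), where $x_i$ are reported actions. With $t(l)=-\sigma^2l/2$, agent $n$'s intended action is $a_n=+1$ if $s_n>t(l_n)$ and $a_n=-1$ otherwise. Under the smooth randomized response strategy with budget $\varepsilon$, the agent reports $x_n=a_n$ with probability $1-u_n(s_n)$ and $x_n=-a_n$ with probability $u_n(s_n)=\frac12e^{-\varepsilon|s_n-t(l_n)|}$; the public updates $l_{n+1}=l_n+\log\frac{\mathbb{P}(x_n\mid l_n,\theta=+1)}{\mathbb{P}(x_n\mid l_n,\theta=-1)}$ by Bayes' rule. Asymptotic learning means $\lim_{n\to\infty}\mathbb{P}(a_n=\theta)=1$. *)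

From Stdlib Require Import Reals.
From Coquelicot Require Import Coquelicot.
Open Scope R_scope.

(* Binary values (state theta, actions a_n, reports x_n) are encoded as bool:
   true = +1, false = -1. *)
Definition sgn (b : bool) : R := if b then 1 else -1.

Definition gauss_pdf (sigma : R) (theta : bool) (s : R) : R :=
  exp (- (s - sgn theta) ^ 2 / (2 * sigma ^ 2)) / (sigma * sqrt (2 * PI)).

Definition int_R (f : R -> R) : R :=
  RInt_gen f (Rbar_locally m_infty) (Rbar_locally p_infty).

Definition thr (sigma l : R) : R := - sigma ^ 2 * l / 2.

Definition intended (sigma l s : R) : bool :=
  if Rlt_dec (thr sigma l) s then true else false.

Definition flip_prob (sigma eps l s : R) : R :=
  / 2 * exp (- eps * Rabs (s - thr sigma l)).

(* P(x_n = x | l_n = l, theta): probability that the agent reports x. *)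
Definition report_prob (sigma eps l : R) (theta x : bool) : R :=
  int_R (fun s => gauss_pdf sigma theta s *
    (if Bool.eqb (intended sigma l s) x
     then 1 - flip_prob sigma eps l s
     else flip_prob sigma eps l s)).

Definition llr_update (sigma eps l : R) (x : bool) : R :=
  l + ln (report_prob sigma eps l true x / report_prob sigma eps l false x).

Definition correct_given (sigma l : R) (theta : bool) : R :=
  int_R (fun s => gauss_pdf sigma theta s *
    (if Bool.eqb (intended sigma l s) theta then 1 else 0)).

(* Given theta and current public LLR l, the probability that the agent k steps
   later takes the correct action: law of total probability over the next
   k reports (the public belief evolves as a Markov chain given theta). *)
Fixpoint correct_after (sigma eps : R) (theta : bool) (k : nat) (l : R) : R :=
  match k with
  | O => correct_given sigma l theta
  | S k' => report_prob sigma eps l theta true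
              * correct_after sigma eps theta k' (llr_update sigma eps l true)
          + report_prob sigma eps l theta false
              * correct_after sigma eps theta k' (llr_update sigma eps l false)
  end.

(* P(a_n = theta) for agent n >= 1 (l_1 = 0, uniform prior on theta). *)
Definition prob_correct (sigma eps : R) (n : nat) : R :=
  / 2 * (correct_after sigma eps true (n - 1) 0
         + correct_after sigma eps false (n - 1) 0).

From Stdlib Require Import Reals Lra Lia Psatz.
From Coquelicot Require Import Coquelicot.
Open Scope R_scope.

(* Let [err_theta k l] be the probability, given [theta], that the agent [k] steps after the
   public log-likelihood ratio was [l] decides wrongly, and let [l_x] be the Bayes update of
   [l] after report [x]. The quantity
     weighted_error k l = e^(l/2) err_true k l + e^(-l/2) err_false k l
   satisfies the exact recursion weighted_error (k+1) l = sum_x b_x l * weighted_error k l_x,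
   whose weights are the Bhattacharyya coefficients b_x l = sqrt (P(x | l, true) P(x | l, false)).
   The smooth randomized response flips the intended action with probability in (0, 1/2], so
   reports remain informative at every belief: b_true l + b_false l <= 1 - c * phi l with
   phi l = exp (- 2 eps |t(l)|) > 0. Summing, the iterates of [phi] along this recursion have
   total mass at most 1/c and hence tend to 0. A Chernoff bound gives
   weighted_error 0 l <= 2 e^(-|l|/2) <= d + C_d phi l for every d > 0, so
   weighted_error k 0 -> 0 and P(a_n = theta) = 1 - weighted_error (n-1) 0 / 2 -> 1. *)

Lemma exp_le_exp x y : x <= y -> exp x <= exp y.
Proof. intros [H | ->]; [now apply Rlt_le, exp_increasing | lra]. Qed.

Lemma one_le_exp x : 0 <= x -> 1 <= exp x.
Proof. intros H. rewrite <- exp_0. now apply exp_le_exp. Qed.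

Lemma exp_le_1 x : x <= 0 -> exp x <= 1.
Proof. intros H. rewrite <- exp_0. now apply exp_le_exp. Qed.

Lemma exp_half_ln x : 0 < x -> exp (ln x / 2) = sqrt x.
Proof.
  intros Hx. rewrite <- (sqrt_square (exp (ln x / 2))) by (apply Rlt_le, exp_pos).
  rewrite <- exp_plus. replace (ln x / 2 + ln x / 2) with (ln x) by field.
  now rewrite exp_ln.
Qed.

Lemma exp_half_mul_le l a : 0 <= a <= 1 -> a <= exp (- l) -> exp (l / 2) * a <= exp (- Rabs l / 2).
Proof.
  intros Ha Hl. pose proof (exp_pos (l / 2)).
  destruct (Rle_dec 0 l).
  - rewrite Rabs_right by lra.
    replace (exp (- l / 2)) with (exp (l / 2) * exp (- l)) by (rewrite <- exp_plus; f_equal; field).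
    now apply Rmult_le_compat_l; [lra|].
  - rewrite Rabs_left by lra. replace (- - l / 2) with (l / 2) by field. nra.
Qed.

Lemma exp_half_llr_update p m l : 0 < p -> 0 < m ->
  exp (l / 2) * p = sqrt (p * m) * exp ((l + ln (p / m)) / 2) /\
  exp (- l / 2) * m = sqrt (p * m) * exp (- (l + ln (p / m)) / 2).
Proof.
  intros Hp Hm.
  replace (ln (p / m)) with (ln p - ln m)
    by (unfold Rdiv; rewrite ln_mult, ln_Rinv by auto using Rinv_0_lt_compat; ring).
  replace ((l + (ln p - ln m)) / 2) with (l / 2 + ln p / 2 + - (ln m / 2)) by field.
  replace (- (l + (ln p - ln m)) / 2) with (- l / 2 + ln m / 2 + - (ln p / 2)) by field.
  rewrite !exp_plus, !exp_Ropp, !exp_half_ln, sqrt_mult_alt by lra.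
  pose proof (sqrt_sqrt p ltac:(lra)). pose proof (sqrt_sqrt m ltac:(lra)).
  pose proof (sqrt_lt_R0 p Hp). pose proof (sqrt_lt_R0 m Hm).
  split; field_simplify; try lra; nra.
Qed.

Lemma mul_one_sub_convex A p1 p2 a1 a2 : p1 + p2 = 1 ->
  A * (1 - (p1 * a1 + p2 * a2)) = A * p1 * (1 - a1) + A * p2 * (1 - a2).
Proof. intros H. replace p2 with (1 - p1) by lra. ring. Qed.

Lemma binary_bhattacharyya_le qa qb : 0 <= qa <= 1 -> 0 <= qb <= 1 ->
  sqrt ((1 - qa) * (1 - qb)) + sqrt (qa * qb) <= 1 - (qb - qa) ^ 2 / 8.
Proof.
  intros Ha Hb. rewrite !sqrt_mult_alt by lra.
  pose proof (sqrt_sqrt qa ltac:(lra)). pose proof (sqrt_sqrt qb ltac:(lra)).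
  pose proof (sqrt_sqrt (1 - qa) ltac:(lra)). pose proof (sqrt_sqrt (1 - qb) ltac:(lra)).
  pose proof (sqrt_pos qa). pose proof (sqrt_pos qb).
  set (x := sqrt qa) in *. set (y := sqrt qb) in *.
  set (X := sqrt (1 - qa)) in *. set (Y := sqrt (1 - qb)) in *.
  clearbody x y X Y. subst qa qb.
  (* [1 - X Y - x y = ((x - y)^2 + (X - Y)^2) / 2] and [(y^2 - x^2)^2 <= 4 (y - x)^2]. *)
  assert (x <= 1) by nra. assert (y <= 1) by nra.
  assert ((y * y - x * x) ^ 2 <= 4 * (y - x) ^ 2).
  { replace ((y * y - x * x) ^ 2) with ((y - x) ^ 2 * (y + x) ^ 2) by ring.
    pose proof (pow2_ge_0 (y - x)). assert ((y + x) ^ 2 <= 4) by nra. nra. }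
  pose proof (pow2_ge_0 (X - Y)). nra.
Qed.

Lemma exp_le_eps_plus_slower a kappa d : 0 < a -> 0 <= kappa -> 0 < d ->
  exists C, forall x, 0 <= x -> exp (- a * x) <= d + C * exp (- kappa * x).
Proof.
  intros Ha Hk Hd. set (L := Rmax 0 (- ln d / a)).
  exists (exp (kappa * L)). intros x Hx.
  pose proof (exp_pos (kappa * L)). pose proof (exp_pos (- kappa * x)).
  destruct (Rle_dec L x) as [HLx | HLx].
  - assert (Hxa : - ln d <= a * x).
    { assert (Hx' : - ln d / a <= x) by (eapply Rle_trans; [apply Rmax_r | exact HLx]).
      apply Rmult_le_compat_l with (r := a) in Hx'; [|lra]. field_simplify in Hx'; lra. }
    assert (exp (- a * x) <= d) by (rewrite <- (exp_ln d Hd); apply exp_le_exp; lra).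
    nra.
  - assert (exp (- a * x) <= 1) by (apply exp_le_1; nra).
    assert (1 <= exp (kappa * L) * exp (- kappa * x))
      by (rewrite <- exp_plus; apply one_le_exp; nra).
    lra.
Qed.

Lemma is_lim_seq_0_bounded_partial_sums (a : nat -> R) B :
  (forall n, 0 <= a n) -> (forall N, sum_f_R0 a N <= B) -> is_lim_seq a 0.
Proof.
  intros Ha HB. apply ex_series_lim_0, ex_series_Reals_1, growing_cv.
  - intros n. simpl. pose proof (Ha (S n)). lra.
  - exists B. intros y [N ->]. apply HB.
Qed.

Lemma is_lim_seq_0_le_eps_plus (u v : nat -> R) :
  (forall k, 0 <= u k) -> (forall d, 0 < d -> exists C, forall k, u k <= d + C * v k) ->
  is_lim_seq v 0 -> is_lim_seq u 0.
Proof.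
  intros Hu Hd Hv. apply is_lim_seq_spec. intros e. pose proof (cond_pos e).
  destruct (Hd (e / 2)) as [C HC]; [lra|].
  assert (HCv : is_lim_seq (fun k => C * v k) 0).
  { replace (Finite 0) with (Rbar_mult C 0) by (simpl; f_equal; ring).
    now apply is_lim_seq_scal_l. }
  apply is_lim_seq_spec in HCv. destruct (HCv (pos_div_2 e)) as [N HN].
  exists N. intros k Hk. specialize (HN k Hk). simpl in HN. rewrite Rminus_0_r in *.
  pose proof (HC k). pose proof (Hu k). pose proof (Rle_abs (C * v k)).
  rewrite Rabs_right by lra. lra.
Qed.

(** * Improper integrals over the real line *)

(* Unlike [is_RInt_gen], this also records integrability on compact intervals,
   which is what domination arguments need. *)
Definition is_RInt_line (F : R -> R) (v : R) : Prop :=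
  (forall a b, ex_RInt F a b) /\
  exists L1 L2 : R, is_lim (fun x => RInt F 0 x) p_infty L1 /\
    is_lim (fun x => RInt F 0 x) m_infty L2 /\ v = L1 - L2.

Lemma RInt_const_R c a b : RInt (fun _ => c) a b = c * (b - a).
Proof.
  rewrite (RInt_const (V:=R_CompleteNormedModule)). unfold scal; simpl; unfold mult; simpl. ring.
Qed.

Lemma RInt_from_0 F a b : (forall a b, ex_RInt F a b) ->
  RInt F a b = RInt F 0 b - RInt F 0 a.
Proof.
  intros HF. pose proof (RInt_Chasles F 0 a b (HF 0 a) (HF a b)) as E.
  unfold plus in E; simpl in E. lra.
Qed.

Lemma is_RInt_line_gen F v : is_RInt_line F v ->
  is_RInt_gen F (Rbar_locally m_infty) (Rbar_locally p_infty) v.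
Proof.
  intros [HF [L1 [L2 [H1 [H2 ->]]]]].
  apply filterlimi_lim_ext with (f := fun ab => RInt F (fst ab) (snd ab)).
  { intros ab; apply (RInt_correct (V:=R_CompleteNormedModule)), HF. }
  apply filterlim_ext with (f := fun ab => plus (RInt F 0 (snd ab)) (opp (RInt F 0 (fst ab)))).
  { intros [a b]; simpl. rewrite (RInt_from_0 F a b HF). reflexivity. }
  eapply filterlim_comp_2.
  - eapply filterlim_comp; [apply filterlim_snd | exact H1].
  - apply (filterlim_comp _ _ _ (fun ab => RInt F 0 (fst ab)) opp _ (locally L2));
      [eapply filterlim_comp; [apply filterlim_fst | exact H2]|].
    apply (filterlim_opp (K:=R_AbsRing) (V:=R_NormedModule)).
  - apply (filterlim_plus (K:=R_AbsRing) (V:=R_NormedModule)).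
Qed.

Lemma int_R_is_RInt_line F v : is_RInt_line F v -> int_R F = v.
Proof. intros H; apply is_RInt_gen_unique, is_RInt_line_gen, H. Qed.

Lemma is_RInt_line_unique F v w : is_RInt_line F v -> is_RInt_line F w -> v = w.
Proof.
  intros Hv Hw. now rewrite <- (int_R_is_RInt_line F v), <- (int_R_is_RInt_line F w).
Qed.

Lemma is_RInt_line_ext F G v : (forall x, F x = G x) -> is_RInt_line F v -> is_RInt_line G v.
Proof.
  intros E [HF [L1 [L2 [H1 [H2 Hv]]]]]. split.
  - intros a b; apply ex_RInt_ext with F; auto.
  - exists L1, L2; repeat split; auto;
      (eapply is_lim_ext; [|eassumption]); intros y; apply RInt_ext; auto.
Qed.

Lemma is_RInt_line_plus F G v w : is_RInt_line F v -> is_RInt_line G w ->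
  is_RInt_line (fun x => F x + G x) (v + w).
Proof.
  intros [HF [L1 [L2 [H1 [H2 ->]]]]] [HG [M1 [M2 [G1 [G2 ->]]]]]. split.
  - intros a b; apply (ex_RInt_plus (V:=R_NormedModule)); auto.
  - assert (E : forall y, RInt F 0 y + RInt G 0 y = RInt (fun x => F x + G x) 0 y)
      by (intros y; symmetry; apply (RInt_plus (V:=R_CompleteNormedModule)); auto).
    exists (L1 + M1), (L2 + M2); repeat split; [| |ring];
      (eapply is_lim_ext; [exact E|]); eapply is_lim_plus; eauto; reflexivity.
Qed.

Lemma is_RInt_line_scal c F v : is_RInt_line F v -> is_RInt_line (fun x => c * F x) (c * v).
Proof.
  intros [HF [L1 [L2 [H1 [H2 ->]]]]]. split.
  - intros a b; apply (ex_RInt_scal (V:=R_NormedModule)); auto.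
  - assert (E : forall y, c * RInt F 0 y = RInt (fun x => c * F x) 0 y)
      by (intros y; symmetry; apply (RInt_scal (V:=R_CompleteNormedModule)); auto).
    exists (c * L1), (c * L2); repeat split; [| |ring]; (eapply is_lim_ext; [exact E|]).
    + now apply (is_lim_scal_l _ c _ L1).
    + now apply (is_lim_scal_l _ c _ L2).
Qed.

Lemma is_RInt_line_minus F G v w : is_RInt_line F v -> is_RInt_line G w ->
  is_RInt_line (fun x => F x - G x) (v - w).
Proof.
  intros HF HG.
  apply is_RInt_line_ext with (fun x => F x + (-1) * G x); [intros; ring|].
  replace (v - w) with (v + (-1) * w) by ring.
  apply is_RInt_line_plus, is_RInt_line_scal; auto.
Qed.

Lemma RInt_le_is_RInt_line F v a b : (forall x, 0 <= F x) -> is_RInt_line F v -> a <= b ->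
  RInt F a b <= v.
Proof.
  intros Hpos [HF [L1 [L2 [H1 [H2 ->]]]]] Hab.
  rewrite RInt_from_0 by auto.
  assert (B1 : Rbar_le (RInt F 0 b) L1).
  { apply (is_lim_le_loc (fun _ => RInt F 0 b) (fun x => RInt F 0 x) p_infty);
      [|apply is_lim_const|exact H1].
    exists b; intros x Hx.
    pose proof (RInt_ge_0 F b x ltac:(lra) (HF b x) (fun y _ => Hpos y)) as Hbx.
    rewrite RInt_from_0 in Hbx by auto. lra. }
  assert (B2 : Rbar_le L2 (RInt F 0 a)).
  { apply (is_lim_le_loc (fun x => RInt F 0 x) (fun _ => RInt F 0 a) m_infty);
      [|exact H2|apply is_lim_const].
    exists a; intros x Hx.
    pose proof (RInt_ge_0 F x a ltac:(lra) (HF x a) (fun y _ => Hpos y)) as Hxa.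
    rewrite RInt_from_0 in Hxa by auto. lra. }
  simpl in B1, B2. lra.
Qed.

Lemma is_RInt_line_ge0 F v : (forall x, 0 <= F x) -> is_RInt_line F v -> 0 <= v.
Proof.
  intros Hpos HF. pose proof (RInt_le_is_RInt_line F v 0 0 Hpos HF (Rle_refl 0)) as H.
  now rewrite RInt_point in H.
Qed.

Lemma is_RInt_line_le F G v w : (forall x, F x <= G x) ->
  is_RInt_line F v -> is_RInt_line G w -> v <= w.
Proof.
  intros H HF HG.
  enough (0 <= w - v) by lra.
  apply (is_RInt_line_ge0 (fun x => G x - F x)); [intros x; specialize (H x); lra|].
  apply is_RInt_line_minus; auto.
Qed.

Lemma is_RInt_line_ge_on_interval F v a b m : a <= b ->
  (forall x, 0 <= F x) -> (forall x, a < x < b -> m <= F x) -> is_RInt_line F v ->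
  m * (b - a) <= v.
Proof.
  intros Hab Hpos Hm HF.
  eapply Rle_trans; [|apply (RInt_le_is_RInt_line F v a b Hpos HF Hab)].
  replace (m * (b - a)) with (RInt (fun _ => m) a b)
    by apply RInt_const_R.
  apply RInt_le; auto.
  - apply (ex_RInt_const (V:=R_NormedModule)).
  - apply (proj1 HF).
Qed.

Lemma Rabs_RInt_le_dominated F G a b :
  (forall a b, ex_RInt F a b) -> (forall a b, ex_RInt G a b) ->
  (forall x, Rabs (F x) <= G x) -> Rabs (RInt F a b) <= Rabs (RInt G a b).
Proof.
  intros HF HG Hd.
  assert (K : forall a b, a <= b -> Rabs (RInt F a b) <= Rabs (RInt G a b)).
  { intros u v Huv. eapply Rle_trans; [|apply Rle_abs].
    apply (norm_RInt_le (V:=R_NormedModule) F G u v); auto;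
      apply (RInt_correct (V:=R_CompleteNormedModule)); auto. }
  destruct (Rle_dec a b) as [Hab|Hab]; [now apply K|].
  rewrite <- (opp_RInt_swap (V:=R_CompleteNormedModule) F),
    <- (opp_RInt_swap (V:=R_CompleteNormedModule) G) by auto.
  unfold opp; simpl. rewrite !Rabs_Ropp. apply K; lra.
Qed.

(* Cauchy criterion: the partial integrals of [F] inherit the Cauchy property from those of [G]. *)
Lemma ex_lim_RInt_dominated (Fl : Rbar) F G :
  (forall a b, ex_RInt F a b) -> (forall a b, ex_RInt G a b) ->
  (forall x, Rabs (F x) <= G x) ->
  (exists L : R, is_lim (fun x => RInt G 0 x) Fl L) ->
  exists L : R, is_lim (fun x => RInt F 0 x) Fl L.
Proof.
  intros HF HG Hd [L HL].
  assert (PF : ProperFilter (Rbar_locally' Fl)) by apply Rbar_locally'_filter.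
  destruct (proj1 (filterlim_locally_cauchy (F := Rbar_locally' Fl) (fun x => RInt F 0 x)))
    as [y Hy]; [|now exists y].
  intros e.
  destruct (proj2 (filterlim_locally_cauchy (F := Rbar_locally' Fl) (fun x => RInt G 0 x)))
    with e as [P [HP1 HP2]]; [now exists L|].
  exists P; split; auto.
  intros u v Hu Hv. specialize (HP2 u v Hu Hv). revert HP2.
  unfold ball; simpl; unfold AbsRing_ball, abs, minus, plus, opp; simpl.
  pose proof (Rabs_RInt_le_dominated F G u v HF HG Hd) as K.
  rewrite !(RInt_from_0 _ u v) in K by auto. unfold Rminus in K. lra.
Qed.

Lemma is_RInt_line_int_R_dominated F G w : (forall a b, ex_RInt F a b) ->
  (forall x, Rabs (F x) <= G x) -> is_RInt_line G w -> is_RInt_line F (int_R F).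
Proof.
  intros HF Hd [HG [L1 [L2 [H1 [H2 _]]]]].
  destruct (ex_lim_RInt_dominated p_infty F G HF HG Hd) as [M1 K1]; [now exists L1|].
  destruct (ex_lim_RInt_dominated m_infty F G HF HG Hd) as [M2 K2]; [now exists L2|].
  assert (HFv : is_RInt_line F (M1 - M2)) by (split; [|exists M1, M2]; auto).
  now rewrite (int_R_is_RInt_line F _ HFv).
Qed.

Lemma ex_RInt_piecewise_continuous (F F1 F2 : R -> R) t :
  (forall x, continuous F1 x) -> (forall x, continuous F2 x) ->
  (forall s, s < t -> F s = F1 s) -> (forall s, t < s -> F s = F2 s) ->
  forall a b, ex_RInt F a b.
Proof.
  intros C1 C2 E1 E2.
  assert (K : forall a, ex_RInt F a t).
  { intros a. destruct (Rle_dec a t).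
    - apply (ex_RInt_ext F1); [|now apply (ex_RInt_continuous (V:=R_CompleteNormedModule))].
      intros x Hx. rewrite Rmax_right in Hx by lra. rewrite E1; lra.
    - apply (ex_RInt_ext F2); [|now apply (ex_RInt_continuous (V:=R_CompleteNormedModule))].
      intros x Hx. rewrite Rmin_right in Hx by lra. rewrite E2; lra. }
  intros a b. apply (ex_RInt_Chasles F a t b); [apply K|].
  apply (ex_RInt_swap (V:=R_NormedModule)), K.
Qed.

Lemma Rbar_affine_infty (Fl : Rbar) (u w : R) : 0 < u -> (Fl = p_infty \/ Fl = m_infty) ->
  Rbar_plus (Rbar_mult u Fl) w = Fl.
Proof.
  intros Hu [-> | ->]; rewrite Rbar_mult_comm.
  - rewrite (is_Rbar_mult_unique _ _ _ (is_Rbar_mult_p_infty_pos u Hu)); reflexivity.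
  - rewrite (is_Rbar_mult_unique _ _ _ (is_Rbar_mult_m_infty_pos u Hu)); reflexivity.
Qed.

Lemma is_RInt_line_comp_lin F v u w : 0 < u -> is_RInt_line F v ->
  is_RInt_line (fun s => u * F (u * s + w)) v.
Proof.
  intros Hu [HF [L1 [L2 [H1 [H2 ->]]]]].
  assert (E : forall x, RInt F 0 (u * x + w) - RInt F 0 w = RInt (fun s => u * F (u * s + w)) 0 x).
  { intros x. transitivity (RInt F (u * 0 + w) (u * x + w)).
    - rewrite (RInt_from_0 F (u * 0 + w)) by auto. now replace (u * 0 + w) with w by ring.
    - symmetry. apply (RInt_comp_lin (V:=R_CompleteNormedModule)), HF. }
  split.
  - intros a b. now apply (ex_RInt_comp_lin (V:=R_NormedModule)).
  - exists (L1 - RInt F 0 w), (L2 - RInt F 0 w); repeat split; [| |ring];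
      (eapply is_lim_ext; [exact E|]).
    + apply (is_lim_minus _ _ _ L1 (RInt F 0 w)); [|apply is_lim_const|reflexivity].
      apply is_lim_comp_lin; [rewrite Rbar_affine_infty; auto | lra].
    + apply (is_lim_minus _ _ _ L2 (RInt F 0 w)); [|apply is_lim_const|reflexivity].
      apply is_lim_comp_lin; [rewrite Rbar_affine_infty; auto | lra].
Qed.

(** * The Gaussian integral *)

Definition gauss (t : R) : R := exp (- (t * t)).
Definition gauss_prim (x : R) : R := RInt gauss 0 x.

(* Classical trick: [gauss_prim x ^ 2 + gauss_aux x] has derivative 0, equals [PI / 4] at 0,
   and [gauss_aux x <= exp (- x ^ 2)] vanishes at infinity. *)
Definition gauss_aux_integrand (x t : R) : R := exp (- (x * x) * (1 + t * t)) / (1 + t * t).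
Definition gauss_aux (x : R) : R := RInt (gauss_aux_integrand x) 0 1.

Lemma continuous_gauss x : continuous gauss x.
Proof. apply (ex_derive_continuous (V:=R_NormedModule)). unfold gauss. auto_derive. auto. Qed.

Lemma ex_RInt_gauss a b : ex_RInt gauss a b.
Proof. apply (ex_RInt_continuous (V:=R_CompleteNormedModule)). intros; apply continuous_gauss. Qed.

Lemma is_derive_gauss_prim x : is_derive gauss_prim x (gauss x).
Proof.
  apply (is_derive_RInt (V:=R_CompleteNormedModule) gauss gauss_prim 0 x).
  - apply filter_forall. intros b. apply (RInt_correct (V:=R_CompleteNormedModule)), ex_RInt_gauss.
  - apply continuous_gauss.
Qed.

Lemma gauss_prim_0 : gauss_prim 0 = 0.
Proof. unfold gauss_prim. now rewrite RInt_point. Qed.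

Lemma gauss_prim_ge0 x : 0 <= x -> 0 <= gauss_prim x.
Proof.
  intros Hx. apply RInt_ge_0; auto using ex_RInt_gauss.
  intros; apply Rlt_le, exp_pos.
Qed.

Lemma gauss_prim_opp x : gauss_prim (- x) = - gauss_prim x.
Proof.
  unfold gauss_prim.
  replace (- x) with (-1 * x + 0) by ring. replace 0 with (-1 * 0 + 0) at 1 by ring.
  rewrite <- (RInt_comp_lin (V:=R_CompleteNormedModule)) by apply ex_RInt_gauss.
  rewrite (RInt_ext _ (fun y => -1 * gauss y))
    by (intros; unfold gauss, scal; simpl; unfold mult; simpl; do 2 f_equal; ring).
  rewrite (RInt_scal (V:=R_CompleteNormedModule)) by apply ex_RInt_gauss.
  unfold scal; simpl; unfold mult; simpl. ring.
Qed.

Lemma one_plus_sq_pos t : 0 < 1 + t * t.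
Proof. nra. Qed.

Lemma continuous_gauss_aux_integrand x t : continuous (gauss_aux_integrand x) t.
Proof.
  apply (ex_derive_continuous (V:=R_NormedModule)). unfold gauss_aux_integrand. auto_derive.
  pose proof (one_plus_sq_pos t). lra.
Qed.

Lemma ex_RInt_gauss_aux_integrand x a b : ex_RInt (gauss_aux_integrand x) a b.
Proof.
  apply (ex_RInt_continuous (V:=R_CompleteNormedModule)).
  intros; apply continuous_gauss_aux_integrand.
Qed.

Lemma Derive_gauss_aux_integrand x t :
  Derive (fun z => gauss_aux_integrand z t) x = -2 * x * exp (- (x * x) * (1 + t * t)).
Proof.
  pose proof (one_plus_sq_pos t).
  apply is_derive_unique. unfold gauss_aux_integrand. auto_derive; [lra|]. field. lra.
Qed.

Lemma continuity_2d_pt_exp f x y :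
  continuity_2d_pt f x y -> continuity_2d_pt (fun u v => exp (f u v)) x y.
Proof.
  intros H. apply continuity_2d_pt_filterlim. apply continuity_2d_pt_filterlim in H.
  eapply filterlim_comp; [apply H|].
  apply (ex_derive_continuous (V:=R_NormedModule) exp). auto_derive; auto.
Qed.

Lemma is_derive_gauss_aux x : is_derive gauss_aux x (-2 * gauss x * gauss_prim x).
Proof.
  replace (-2 * gauss x * gauss_prim x)
    with (RInt (fun t => Derive (fun z => gauss_aux_integrand z t) x) 0 1).
  - apply (is_derive_RInt_param gauss_aux_integrand 0 1 x).
    + apply filter_forall. intros y t _. unfold gauss_aux_integrand. auto_derive.
      pose proof (one_plus_sq_pos t); lra.
    + intros t _.
      apply continuity_2d_pt_ext with (fun u v => -2 * u * exp (- (u * u) * (1 + v * v))).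
      { intros; now rewrite Derive_gauss_aux_integrand. }
      repeat first [ apply continuity_2d_pt_mult | apply continuity_2d_pt_plus
                   | apply continuity_2d_pt_opp | apply continuity_2d_pt_exp
                   | apply continuity_2d_pt_const | apply continuity_2d_pt_id1
                   | apply continuity_2d_pt_id2 ].
    + apply filter_forall. intros y. apply ex_RInt_gauss_aux_integrand.
  - rewrite (RInt_ext _ (fun t => scal (-2 * gauss x) (scal x (gauss (x * t + 0))))).
    2:{ intros t _. rewrite Derive_gauss_aux_integrand.
        unfold gauss, scal; simpl; unfold mult; simpl.
        replace (- (x * x) * (1 + t * t)) with (- (x * x) + - ((x * t + 0) * (x * t + 0))) by ring.
        rewrite exp_plus. ring. }
    rewrite (RInt_scal (V:=R_CompleteNormedModule)).
    2:{ apply (ex_RInt_comp_lin (V:=R_NormedModule)), ex_RInt_gauss. }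
    rewrite (RInt_comp_lin (V:=R_CompleteNormedModule)) by apply ex_RInt_gauss.
    unfold gauss_prim, scal; simpl; unfold mult; simpl.
    replace (x * 0 + 0) with 0 by lra. now replace (x * 1 + 0) with x by lra.
Qed.

Lemma gauss_aux_0 : gauss_aux 0 = PI / 4.
Proof.
  unfold gauss_aux. rewrite <- atan_1. apply is_RInt_unique.
  replace (atan 1) with (minus (atan 1) (atan 0))
    by (rewrite atan_0; unfold minus, plus, opp; simpl; ring).
  apply (is_RInt_ext (V:=R_NormedModule) (fun t => / (1 + t²))).
  { intros t _. unfold gauss_aux_integrand, Rsqr.
    replace (- (0 * 0) * (1 + t * t)) with 0 by ring.
    now rewrite exp_0, Rdiv_1_l. }
  apply (is_RInt_derive (V:=R_CompleteNormedModule) atan).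
  - intros; apply is_derive_atan.
  - intros y _. apply (ex_derive_continuous (V:=R_NormedModule)). unfold Rsqr. auto_derive.
    pose proof (one_plus_sq_pos y); lra.
Qed.

Lemma gauss_prim_sq_plus_aux x : gauss_prim x ^ 2 + gauss_aux x = PI / 4.
Proof.
  rewrite <- gauss_aux_0. replace (gauss_aux 0) with (gauss_prim 0 ^ 2 + gauss_aux 0)
    by (rewrite gauss_prim_0; ring).
  assert (D : forall y, is_derive (fun z => gauss_prim z ^ 2 + gauss_aux z) y 0).
  { intros y.
    replace 0 with (INR 2 * gauss y * gauss_prim y ^ Init.Nat.pred 2
                    + (-2 * gauss y * gauss_prim y)) by (simpl; ring).
    apply (is_derive_plus (K:=R_AbsRing) (V:=R_NormedModule)).
    - apply (is_derive_pow gauss_prim 2 y (gauss y)), is_derive_gauss_prim.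
    - apply is_derive_gauss_aux. }
  pose proof (is_RInt_derive (V:=R_CompleteNormedModule) _ _ 0 x (fun y _ => D y)
    (fun y _ => continuous_const 0 y)) as I1.
  pose proof (is_RInt_unique _ _ _ _ I1) as U.
  rewrite RInt_const_R in U. unfold minus, plus, opp in U; simpl in U. lra.
Qed.

Lemma gauss_aux_bounds x : 0 <= gauss_aux x <= exp (- (x * x)).
Proof.
  assert (Hf : forall t, 0 <= t -> 0 <= gauss_aux_integrand x t <= exp (- (x * x))).
  { intros t Ht. unfold gauss_aux_integrand. pose proof (one_plus_sq_pos t).
    pose proof (exp_pos (- (x * x) * (1 + t * t))).
    assert (exp (- (x * x) * (1 + t * t)) <= exp (- (x * x))) by (apply exp_le_exp; nra).
    split; [apply Rlt_le, Rdiv_lt_0_compat; lra|].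
    apply Rle_trans with (exp (- (x * x) * (1 + t * t))); [|lra].
    apply Rmult_le_reg_r with (1 + t * t); [lra|]. field_simplify; nra. }
  split.
  - apply RInt_ge_0; [lra | apply ex_RInt_gauss_aux_integrand |].
    intros t Ht; apply Hf; lra.
  - replace (exp (- (x * x))) with (RInt (fun _ => exp (- (x * x))) 0 1)
      by (now rewrite RInt_const_R, Rminus_0_r, Rmult_1_r).
    apply RInt_le;
      [lra | apply ex_RInt_gauss_aux_integrand | apply (ex_RInt_const (V:=R_NormedModule)) |].
    intros t Ht; apply Hf; lra.
Qed.

Lemma is_lim_exp_neg_sq : is_lim (fun x => exp (- (x * x))) p_infty 0.
Proof.
  apply (is_lim_comp exp (fun x => - (x * x)) p_infty 0 m_infty); [apply is_lim_exp_m | |].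
  - replace m_infty with (Rbar_opp (Rbar_mult p_infty p_infty)) by reflexivity.
    apply is_lim_opp, is_lim_mult; try apply is_lim_id. simpl; auto.
  - exists 0. intros; discriminate.
Qed.

Lemma is_lim_gauss_prim_p_infty : is_lim gauss_prim p_infty (sqrt PI / 2).
Proof.
  assert (L2 : is_lim (fun x => gauss_prim x ^ 2) p_infty (PI / 4 - 0)).
  { apply (is_lim_ext (fun x => PI / 4 - gauss_aux x)).
    { intros y. pose proof (gauss_prim_sq_plus_aux y). lra. }
    apply (is_lim_minus _ _ _ (PI / 4) 0); [apply is_lim_const| |reflexivity].
    apply (is_lim_le_le_loc (fun _ => 0) (fun x => exp (- (x * x))));
      [exists 0; intros; apply gauss_aux_bounds | apply is_lim_const | apply is_lim_exp_neg_sq]. }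
  apply (is_lim_ext_loc (fun x => sqrt (gauss_prim x ^ 2))).
  { exists 0. intros y Hy. apply sqrt_pow2, gauss_prim_ge0; lra. }
  replace (sqrt PI / 2) with (sqrt (PI / 4 - 0)).
  2:{ replace (PI / 4 - 0) with (PI * / (2 * 2)) by field.
      rewrite sqrt_mult_alt, sqrt_inv, sqrt_square by (pose proof PI_RGT_0; lra). field. }
  eapply filterlim_comp; [apply L2|].
  apply continuity_pt_filterlim, continuity_pt_sqrt. pose proof PI_RGT_0; lra.
Qed.

Lemma is_lim_gauss_prim_m_infty : is_lim gauss_prim m_infty (- (sqrt PI / 2)).
Proof.
  apply (is_lim_ext (fun x => - gauss_prim (- x))).
  { intros y. rewrite gauss_prim_opp. ring. }
  apply (is_lim_opp _ _ (sqrt PI / 2)).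
  apply (is_lim_comp gauss_prim Ropp m_infty (sqrt PI / 2) p_infty).
  - apply is_lim_gauss_prim_p_infty.
  - apply (is_lim_opp _ m_infty m_infty), is_lim_id.
  - exists 0. intros; discriminate.
Qed.

Lemma is_RInt_line_gauss : is_RInt_line gauss (sqrt PI).
Proof.
  split; [apply ex_RInt_gauss|].
  exists (sqrt PI / 2), (- (sqrt PI / 2)).
  repeat split; [apply is_lim_gauss_prim_p_infty | apply is_lim_gauss_prim_m_infty | field].
Qed.

Definition normal_pdf (sigma m s : R) : R :=
  exp (- (s - m) ^ 2 / (2 * sigma ^ 2)) / (sigma * sqrt (2 * PI)).

Lemma gauss_pdf_normal_pdf sigma theta : gauss_pdf sigma theta = normal_pdf sigma (sgn theta).
Proof. reflexivity. Qed.

Lemma sqrt_2PI_pos : 0 < sqrt (2 * PI).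
Proof. apply sqrt_lt_R0. pose proof PI_RGT_0; lra. Qed.

Lemma normal_pdf_pos sigma m s : 0 < sigma -> 0 < normal_pdf sigma m s.
Proof.
  intros Hs. apply Rdiv_lt_0_compat; [apply exp_pos|].
  apply Rmult_lt_0_compat; [exact Hs | apply sqrt_2PI_pos].
Qed.

Lemma continuous_normal_pdf sigma m s : continuous (normal_pdf sigma m) s.
Proof.
  apply (ex_derive_continuous (V:=R_NormedModule)). unfold normal_pdf. auto_derive. exact I.
Qed.

Lemma normal_pdf_le_dist sigma m s m' s' : 0 < sigma -> (s - m) ^ 2 <= (s' - m') ^ 2 ->
  normal_pdf sigma m' s' <= normal_pdf sigma m s.
Proof.
  intros Hs Hd. pose proof sqrt_2PI_pos. unfold normal_pdf, Rdiv.
  apply Rmult_le_compat_r; [apply Rlt_le, Rinv_0_lt_compat, Rmult_lt_0_compat; auto|].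
  apply exp_le_exp, Rmult_le_compat_r; [apply Rlt_le, Rinv_0_lt_compat; nra | lra].
Qed.

Lemma is_RInt_line_normal_pdf sigma m : 0 < sigma -> is_RInt_line (normal_pdf sigma m) 1.
Proof.
  intros Hs.
  assert (S2 : 0 < sqrt 2) by (apply sqrt_lt_R0; lra).
  assert (SP : 0 < sqrt PI) by (apply sqrt_lt_R0; pose proof PI_RGT_0; lra).
  set (u := / (sigma * sqrt 2)).
  assert (Hu : 0 < u) by (apply Rinv_0_lt_compat, Rmult_lt_0_compat; auto).
  pose proof (is_RInt_line_scal (/ sqrt PI) _ _
    (is_RInt_line_comp_lin gauss _ u (- m * u) Hu is_RInt_line_gauss)) as H.
  rewrite Rinv_l in H by lra.
  eapply is_RInt_line_ext; [|exact H].
  intros s. unfold normal_pdf, gauss. rewrite sqrt_mult_alt by lra.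
  replace (- ((u * s + - m * u) * (u * s + - m * u))) with (- (s - m) ^ 2 / (2 * sigma ^ 2)).
  - unfold u. field. split; lra.
  - unfold u. field_simplify; [| split; lra | lra].
    rewrite pow2_sqrt by lra. field. lra.
Qed.

(* Exponential tilting: [normal_pdf sigma m s * exp (c * s)] is a multiple of
   [normal_pdf sigma (m + c * sigma ^ 2) s]. *)
Lemma is_RInt_line_normal_pdf_exp sigma m c : 0 < sigma ->
  is_RInt_line (fun s => normal_pdf sigma m s * exp (c * s)) (exp (c * m + c ^ 2 * sigma ^ 2 / 2)).
Proof.
  intros Hs. set (K := c * m + c ^ 2 * sigma ^ 2 / 2).
  pose proof (is_RInt_line_scal (exp K) _ _
                (is_RInt_line_normal_pdf sigma (m + c * sigma ^ 2) Hs)) as H.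
  rewrite Rmult_1_r in H. eapply is_RInt_line_ext; [|exact H].
  intros s. unfold normal_pdf.
  replace (- (s - (m + c * sigma ^ 2)) ^ 2 / (2 * sigma ^ 2))
    with (- (s - m) ^ 2 / (2 * sigma ^ 2) + c * s + - K) by (unfold K; field; lra).
  rewrite !exp_plus, exp_Ropp. pose proof (exp_pos K). pose proof sqrt_2PI_pos.
  field. repeat split; lra.
Qed.

(** * Iterating a sub-stochastic kernel *)

Section KernelIteration.

Variables (w next : R -> bool -> R).
Hypothesis w_ge0 : forall l x, 0 <= w l x.

Fixpoint kernel_iter (f : R -> R) (k : nat) (l : R) : R :=
  match k with
  | O => f l
  | S k' => w l true * kernel_iter f k' (next l true) + w l false * kernel_iter f k' (next l false)
  end.

Lemma kernel_iter_le f g : (forall l, f l <= g l) ->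
  forall k l, kernel_iter f k l <= kernel_iter g k l.
Proof.
  intros Hfg k. induction k as [|k IH]; intros l; simpl; [apply Hfg|].
  pose proof (w_ge0 l true). pose proof (w_ge0 l false).
  pose proof (IH (next l true)). pose proof (IH (next l false)). nra.
Qed.

Lemma kernel_iter_ge0 f : (forall l, 0 <= f l) -> forall k l, 0 <= kernel_iter f k l.
Proof.
  intros Hf k. induction k as [|k IH]; intros l; simpl; [apply Hf|].
  pose proof (w_ge0 l true). pose proof (w_ge0 l false).
  pose proof (IH (next l true)). pose proof (IH (next l false)). nra.
Qed.

Lemma kernel_iter_lin a b f g k l :
  kernel_iter (fun m => a * f m + b * g m) k l = a * kernel_iter f k l + b * kernel_iter g k l.
Proof.
  revert l. induction k as [|k IH]; intros l; simpl; [reflexivity|].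
  rewrite !IH. ring.
Qed.

Lemma kernel_iter_S f k l :
  kernel_iter f (S k) l =
  kernel_iter (fun m => w m true * f (next m true) + w m false * f (next m false)) k l.
Proof.
  revert l. induction k as [|k IH]; intros l; [reflexivity|].
  change (kernel_iter f (S (S k)) l) with
    (w l true * kernel_iter f (S k) (next l true) + w l false * kernel_iter f (S k) (next l false)).
  now rewrite !IH.
Qed.

Variables (phi : R -> R) (c : R).
Hypothesis c_pos : 0 < c.
Hypothesis phi_ge0 : forall l, 0 <= phi l.
Hypothesis mass_defect : forall l, c * phi l <= 1 - w l true - w l false.

Lemma kernel_iter_one_decrease k l :
  c * kernel_iter phi k l <= kernel_iter (fun _ => 1) k l - kernel_iter (fun _ => 1) (S k) l.
Proof.
  rewrite kernel_iter_S.
  replace (kernel_iter (fun _ => 1) k l - _)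
    with (kernel_iter (fun m => 1 * 1 + (-1) * (w m true * 1 + w m false * 1)) k l)
    by (rewrite kernel_iter_lin; ring).
  replace (c * kernel_iter phi k l) with (kernel_iter (fun m => c * phi m + 0 * phi m) k l)
    by (rewrite kernel_iter_lin; ring).
  apply kernel_iter_le. intros m. pose proof (mass_defect m). lra.
Qed.

Lemma kernel_iter_one_bounds k l : 0 <= kernel_iter (fun _ => 1) k l <= 1.
Proof.
  split; [apply kernel_iter_ge0; intros; lra|].
  induction k as [|k IH]; [simpl; lra|].
  pose proof (kernel_iter_one_decrease k l). pose proof (kernel_iter_ge0 phi phi_ge0 k l). nra.
Qed.

Lemma is_lim_seq_kernel_iter l : is_lim_seq (fun k => kernel_iter phi k l) 0.
Proof.
  apply (is_lim_seq_0_bounded_partial_sums _ (/ c)); [intros; now apply kernel_iter_ge0|].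
  intros N. apply Rmult_le_reg_l with c; [exact c_pos|]. rewrite Rinv_r by lra.
  enough (c * sum_f_R0 (fun k => kernel_iter phi k l) N <= 1 - kernel_iter (fun _ => 1) (S N) l)
    by (pose proof (kernel_iter_one_bounds (S N) l); lra).
  induction N as [|N IH].
  - pose proof (kernel_iter_one_decrease 0 l). simpl in *. lra.
  - pose proof (kernel_iter_one_decrease (S N) l). rewrite tech5, Rmult_plus_distr_l. lra.
Qed.

End KernelIteration.

Definition report_kernel (sigma eps l : R) (x : bool) (s : R) : R :=
  if Bool.eqb (intended sigma l s) x then 1 - flip_prob sigma eps l s else flip_prob sigma eps l s.

Definition correct_indicator (sigma l : R) (theta : bool) (s : R) : R :=
  if Bool.eqb (intended sigma l s) theta then 1 else 0.

Lemma intended_lt sigma l s : s < thr sigma l -> intended sigma l s = false.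
Proof. intros H; unfold intended; destruct (Rlt_dec (thr sigma l) s); auto; lra. Qed.

Lemma intended_gt sigma l s : thr sigma l < s -> intended sigma l s = true.
Proof. intros H; unfold intended; destruct (Rlt_dec (thr sigma l) s); auto; lra. Qed.

Lemma flip_prob_bounds sigma eps l s : 0 <= eps -> 0 < flip_prob sigma eps l s <= / 2.
Proof.
  intros He. unfold flip_prob. pose proof (exp_pos (- eps * Rabs (s - thr sigma l))).
  assert (exp (- eps * Rabs (s - thr sigma l)) <= 1).
  { apply exp_le_1. pose proof (Rabs_pos (s - thr sigma l)). nra. }
  lra.
Qed.

Lemma report_kernel_bounds sigma eps l x s : 0 <= eps ->
  flip_prob sigma eps l s <= report_kernel sigma eps l x s <= 1 - flip_prob sigma eps l s.
Proof.
  intros He. pose proof (flip_prob_bounds sigma eps l s He). unfold report_kernel.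
  destruct (Bool.eqb _ x); lra.
Qed.

Lemma report_kernel_true_false sigma eps l s :
  report_kernel sigma eps l true s + report_kernel sigma eps l false s = 1.
Proof. unfold report_kernel. destruct (intended sigma l s); simpl; ring. Qed.

Lemma report_kernel_false_eq sigma eps l s :
  report_kernel sigma eps l false s =
  if Rlt_dec (thr sigma l) s then / 2 * exp (- eps * (s - thr sigma l))
  else 1 - / 2 * exp (- eps * (thr sigma l - s)).
Proof.
  unfold report_kernel, intended, flip_prob. destruct (Rlt_dec (thr sigma l) s); simpl.
  - now rewrite Rabs_right by lra.
  - rewrite Rabs_left1 by lra. do 3 f_equal. ring.
Qed.

Lemma ex_RInt_normal_pdf_mult_piecewise sigma m (H h1 h2 : R -> R) t :
  (forall s, continuous h1 s) -> (forall s, continuous h2 s) ->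
  (forall s, s < t -> H s = h1 s) -> (forall s, t < s -> H s = h2 s) ->
  forall a b, ex_RInt (fun s => normal_pdf sigma m s * H s) a b.
Proof.
  intros C1 C2 E1 E2.
  apply (ex_RInt_piecewise_continuous _ (fun s => normal_pdf sigma m s * h1 s)
           (fun s => normal_pdf sigma m s * h2 s) t).
  - intros s. apply (continuous_mult (K:=R_AbsRing)); auto using continuous_normal_pdf.
  - intros s. apply (continuous_mult (K:=R_AbsRing)); auto using continuous_normal_pdf.
  - intros s Hst. now rewrite E1.
  - intros s Hst. now rewrite E2.
Qed.

Lemma continuous_plus_scal_exp a b c d s : continuous (fun s => a + b * exp (c * s + d)) s.
Proof. apply (ex_derive_continuous (V:=R_NormedModule)). auto_derive. exact I. Qed.

Lemma ex_RInt_report sigma eps l theta x a b :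
  ex_RInt (fun s => gauss_pdf sigma theta s * report_kernel sigma eps l x s) a b.
Proof.
  set (t := thr sigma l).
  apply (ex_RInt_normal_pdf_mult_piecewise _ _ _
    (fun s => (if x then 0 else 1) + (if x then / 2 else - / 2) * exp (eps * s + - eps * t))
    (fun s => (if x then 1 else 0) + (if x then - / 2 else / 2) * exp (- eps * s + eps * t)) t);
    try (intros; apply continuous_plus_scal_exp); intros s Hst;
    unfold report_kernel, flip_prob.
  - rewrite intended_lt, Rabs_left by (unfold t in Hst; lra).
    replace (- eps * - (s - thr sigma l)) with (eps * s + - eps * t) by (unfold t; ring).
    destruct x; simpl; ring.
  - rewrite intended_gt, Rabs_right by (unfold t in Hst; lra).
    replace (- eps * (s - thr sigma l)) with (- eps * s + eps * t) by (unfold t; ring).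
    destruct x; simpl; ring.
Qed.

Lemma ex_RInt_correct sigma l theta a b :
  ex_RInt (fun s => gauss_pdf sigma theta s * correct_indicator sigma l theta s) a b.
Proof.
  apply (ex_RInt_normal_pdf_mult_piecewise _ _ _
    (fun _ => if theta then 0 else 1) (fun _ => if theta then 1 else 0) (thr sigma l));
    try (intros; apply continuous_const); intros s Hst;
    unfold correct_indicator; [rewrite intended_lt | rewrite intended_gt]; auto;
    destruct theta; simpl; ring.
Qed.

Lemma is_RInt_line_report sigma eps l theta x : 0 < sigma -> 0 <= eps ->
  is_RInt_line (fun s => gauss_pdf sigma theta s * report_kernel sigma eps l x s)
    (report_prob sigma eps l theta x).
Proof.
  intros Hs He.
  apply (is_RInt_line_int_R_dominated _ (gauss_pdf sigma theta) 1);
    [apply ex_RInt_report | | now apply is_RInt_line_normal_pdf].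
  intros s. pose proof (normal_pdf_pos sigma (sgn theta) s Hs).
  pose proof (report_kernel_bounds sigma eps l x s He).
  pose proof (flip_prob_bounds sigma eps l s He).
  change (gauss_pdf sigma theta s) with (normal_pdf sigma (sgn theta) s).
  rewrite Rabs_right; nra.
Qed.

Lemma is_RInt_line_correct sigma l theta : 0 < sigma ->
  is_RInt_line (fun s => gauss_pdf sigma theta s * correct_indicator sigma l theta s)
    (correct_given sigma l theta).
Proof.
  intros Hs.
  apply (is_RInt_line_int_R_dominated _ (gauss_pdf sigma theta) 1);
    [apply ex_RInt_correct | | now apply is_RInt_line_normal_pdf].
  intros s. pose proof (normal_pdf_pos sigma (sgn theta) s Hs).
  change (gauss_pdf sigma theta s) with (normal_pdf sigma (sgn theta) s).
  unfold correct_indicator; destruct (Bool.eqb _ _); rewrite Rabs_right; lra.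
Qed.

Lemma report_prob_true_false sigma eps l theta : 0 < sigma -> 0 <= eps ->
  report_prob sigma eps l theta true + report_prob sigma eps l theta false = 1.
Proof.
  intros Hs He.
  apply (is_RInt_line_unique (gauss_pdf sigma theta)); [|now apply is_RInt_line_normal_pdf].
  eapply is_RInt_line_ext;
    [|exact (is_RInt_line_plus _ _ _ _ (is_RInt_line_report sigma eps l theta true Hs He)
                                        (is_RInt_line_report sigma eps l theta false Hs He))].
  intros s; cbv beta. rewrite <- Rmult_plus_distr_l, report_kernel_true_false. ring.
Qed.

Lemma flip_prob_ge sigma eps l s : 0 <= eps ->
  / 2 * exp (- eps * (Rabs s + Rabs (thr sigma l))) <= flip_prob sigma eps l s.
Proof.
  intros He. unfold flip_prob. apply Rmult_le_compat_l; [lra|].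
  apply exp_le_exp. pose proof (Rabs_triang s (- thr sigma l)). rewrite Rabs_Ropp in H.
  apply Ropp_le_contravar in H. unfold Rminus. nra.
Qed.

Lemma report_prob_pos sigma eps l theta x : 0 < sigma -> 0 <= eps ->
  0 < report_prob sigma eps l theta x.
Proof.
  intros Hs He.
  set (c := normal_pdf sigma 0 2 * (/ 2 * exp (- eps * (1 + Rabs (thr sigma l))))).
  assert (Hc : 0 < c).
  { pose proof (exp_pos (- eps * (1 + Rabs (thr sigma l)))).
    apply Rmult_lt_0_compat; [now apply normal_pdf_pos | lra]. }
  apply Rlt_le_trans with (c * (1 - 0)); [lra|].
  apply (is_RInt_line_ge_on_interval
           (fun s => gauss_pdf sigma theta s * report_kernel sigma eps l x s));
    [lra | | | now apply is_RInt_line_report].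
  - intros s. pose proof (normal_pdf_pos sigma (sgn theta) s Hs).
    pose proof (report_kernel_bounds sigma eps l x s He).
    pose proof (flip_prob_bounds sigma eps l s He).
    change (gauss_pdf sigma theta s) with (normal_pdf sigma (sgn theta) s). nra.
  - intros s Hs01. change (gauss_pdf sigma theta s) with (normal_pdf sigma (sgn theta) s).
    apply Rmult_le_compat.
    + apply Rlt_le, normal_pdf_pos; auto.
    + pose proof (exp_pos (- eps * (1 + Rabs (thr sigma l)))); lra.
    + apply normal_pdf_le_dist; auto. destruct theta; simpl; nra.
    + eapply Rle_trans; [|apply report_kernel_bounds; auto].
      eapply Rle_trans; [|apply flip_prob_ge; auto].
      rewrite (Rabs_right s) by lra. apply Rmult_le_compat_l; [lra|]. apply exp_le_exp. nra.
Qed.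

Lemma correct_given_bounds sigma l theta : 0 < sigma -> 0 <= correct_given sigma l theta <= 1.
Proof.
  intros Hs.
  assert (Hb : forall s, 0 <= gauss_pdf sigma theta s * correct_indicator sigma l theta s
                        <= gauss_pdf sigma theta s).
  { intros s. pose proof (normal_pdf_pos sigma (sgn theta) s Hs).
    change (gauss_pdf sigma theta s) with (normal_pdf sigma (sgn theta) s).
    unfold correct_indicator; destruct (Bool.eqb _ _); lra. }
  split.
  - apply (is_RInt_line_ge0 _ _ (fun s => proj1 (Hb s))), is_RInt_line_correct; auto.
  - apply (is_RInt_line_le _ _ _ _ (fun s => proj2 (Hb s)));
      [now apply is_RInt_line_correct | now apply is_RInt_line_normal_pdf].
Qed.

Lemma correct_after_le_1 sigma eps theta k l : 0 < sigma -> 0 <= eps ->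
  correct_after sigma eps theta k l <= 1.
Proof.
  intros Hs He. revert l; induction k as [|k IH]; intros l; simpl.
  - now apply correct_given_bounds.
  - pose proof (report_prob_true_false sigma eps l theta Hs He).
    pose proof (report_prob_pos sigma eps l theta true Hs He).
    pose proof (report_prob_pos sigma eps l theta false Hs He).
    pose proof (IH (llr_update sigma eps l true)). pose proof (IH (llr_update sigma eps l false)).
    nra.
Qed.

(** * Chernoff bound on the decision error *)

(* A wrong decision forces [sgn theta * (thr sigma l - s) >= 0], so its indicator is at most
   [exp (sgn theta * mu * (thr sigma l - s))] with [mu = 2 / sigma ^ 2], and by exponential
   tilting the Gaussian expectation of that bound is exactly [exp (- sgn theta * l)]. *)
Lemma error_given_le sigma l theta : 0 < sigma ->
  1 - correct_given sigma l theta <= exp (- sgn theta * l).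
Proof.
  intros Hs. set (mu := 2 / sigma ^ 2). set (c := - sgn theta * mu).
  assert (Hmu : 0 < mu) by (unfold mu; apply Rdiv_lt_0_compat; nra).
  assert (HI := is_RInt_line_scal (exp (- sgn theta * l)) _ _
                  (is_RInt_line_normal_pdf_exp sigma (sgn theta) c Hs)).
  replace (c * sgn theta + c ^ 2 * sigma ^ 2 / 2) with 0 in HI
    by (unfold c, mu; destruct theta; simpl; field; lra).
  rewrite exp_0, Rmult_1_r in HI.
  refine (is_RInt_line_le _ _ _ _ _
            (is_RInt_line_minus _ _ _ _ (is_RInt_line_normal_pdf sigma (sgn theta) Hs)
                                        (is_RInt_line_correct sigma l theta Hs)) HI).
  intros s. change (gauss_pdf sigma theta s) with (normal_pdf sigma (sgn theta) s).
  pose proof (normal_pdf_pos sigma (sgn theta) s Hs).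
  rewrite <- Rmult_assoc, (Rmult_comm _ (normal_pdf _ _ _)), Rmult_assoc, <- exp_plus.
  replace (- sgn theta * l + c * s) with (sgn theta * mu * (thr sigma l - s))
    by (unfold c, mu, thr; field; lra).
  pose proof (exp_pos (sgn theta * mu * (thr sigma l - s))).
  assert (Hw : correct_indicator sigma l theta s = 1 \/
               (correct_indicator sigma l theta s = 0
                /\ 1 <= exp (sgn theta * mu * (thr sigma l - s)))).
  { unfold correct_indicator, intended.
    destruct (Rlt_dec (thr sigma l) s) as [Hts | Hts], theta; simpl; auto;
      right; (split; [reflexivity|]); apply one_le_exp;
      try apply Rnot_lt_le in Hts; simpl; nra. }
  destruct Hw as [-> | [-> Hw]]; nra.
Qed.

Definition weighted_error (sigma eps : R) (k : nat) (l : R) : R :=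
  exp (l / 2) * (1 - correct_after sigma eps true k l)
  + exp (- l / 2) * (1 - correct_after sigma eps false k l).

Lemma weighted_error_ge0 sigma eps k l : 0 < sigma -> 0 <= eps ->
  0 <= weighted_error sigma eps k l.
Proof.
  intros Hs He. unfold weighted_error.
  pose proof (correct_after_le_1 sigma eps true k l Hs He).
  pose proof (correct_after_le_1 sigma eps false k l Hs He).
  pose proof (exp_pos (l / 2)). pose proof (exp_pos (- l / 2)). nra.
Qed.

Lemma weighted_error_0_le sigma eps l : 0 < sigma ->
  weighted_error sigma eps 0 l <= 2 * exp (- Rabs l / 2).
Proof.
  intros Hs. unfold weighted_error; simpl.
  pose proof (correct_given_bounds sigma l true Hs).
  pose proof (correct_given_bounds sigma l false Hs).
  pose proof (error_given_le sigma l true Hs). pose proof (error_given_le sigma l false Hs).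
  simpl in *.
  assert (exp (l / 2) * (1 - correct_given sigma l true) <= exp (- Rabs l / 2))
    by (apply exp_half_mul_le; [lra | now replace (- l) with (- 1 * l) by ring]).
  assert (exp (- l / 2) * (1 - correct_given sigma l false) <= exp (- Rabs l / 2)).
  { rewrite <- (Rabs_Ropp l). replace (- l / 2) with ((- l) / 2) by field.
    apply exp_half_mul_le; [lra | now replace (- - l) with (- - 1 * l) by ring]. }
  lra.
Qed.

(** * Informativeness of a report *)

Lemma report_kernel_false_antitone sigma eps l s1 s2 : 0 <= eps -> s1 <= s2 ->
  report_kernel sigma eps l false s2 <= report_kernel sigma eps l false s1.
Proof.
  intros He H. rewrite !report_kernel_false_eq. set (t := thr sigma l).
  destruct (Rlt_dec t s1), (Rlt_dec t s2).
  - apply Rmult_le_compat_l; [lra|]. apply exp_le_exp. nra.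
  - lra.
  - pose proof (exp_le_1 (- eps * (t - s1)) ltac:(nra)).
    pose proof (exp_le_1 (- eps * (s2 - t)) ltac:(nra)). lra.
  - pose proof (exp_le_exp (- eps * (t - s1)) (- eps * (t - s2)) ltac:(nra)). lra.
Qed.

Lemma report_kernel_false_gap sigma eps l : 0 < eps ->
  / 2 * (1 - exp (- eps)) * exp (- eps * Rabs (thr sigma l)) <=
  report_kernel sigma eps l false (-1) - report_kernel sigma eps l false 0.
Proof.
  intros He. rewrite !report_kernel_false_eq. set (t := thr sigma l).
  pose proof (exp_pos (- eps)) as HE. set (E := exp (- eps)) in *.
  assert (HE1 : E <= 1) by (apply exp_le_1; lra).
  destruct (Rlt_dec t (-1)), (Rlt_dec t 0); try lra.
  - rewrite Rabs_left by lra. set (u := exp (- eps * - t)).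
    replace (exp (- eps * (-1 - t))) with (u / E)
      by (unfold u, E, Rdiv; rewrite <- exp_Ropp, <- exp_plus; f_equal; ring).
    replace (exp (- eps * (0 - t))) with u by (unfold u; f_equal; ring).
    assert (Hu : 0 < u) by (unfold u; apply exp_pos). clearbody u E.
    assert (Hid : / 2 * (u / E) - / 2 * u - / 2 * (1 - E) * u = u * (1 - E) ^ 2 / (2 * E))
      by (field; lra).
    assert (0 <= u * (1 - E) ^ 2 / (2 * E))
      by (apply Rdiv_le_0_compat; [apply Rmult_le_pos; [lra | apply pow2_ge_0] | lra]).
    lra.
  - rewrite Rabs_left by lra. set (u := exp (- eps * - t)).
    replace (exp (- eps * (t - -1))) with (E / u)
      by (unfold u, E, Rdiv; rewrite <- exp_Ropp, <- exp_plus; f_equal; ring).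
    replace (exp (- eps * (0 - t))) with u by (unfold u; f_equal; ring).
    assert (Hu1 : u <= 1) by (apply exp_le_1; nra).
    assert (HuE : E <= u) by (apply exp_le_exp; nra). clearbody u E.
    assert (Hid : 1 - / 2 * (E / u) - / 2 * u - / 2 * (1 - E) * u
                  = (1 - u) * ((2 - E) * u - E) / (2 * u)) by (field; lra).
    assert (0 <= (1 - u) * ((2 - E) * u - E) / (2 * u))
      by (apply Rdiv_le_0_compat; [apply Rmult_le_pos; nra | lra]).
    lra.
  - rewrite Rabs_right by lra.
    replace (exp (- eps * (t - -1))) with (E * exp (- eps * t))
      by (unfold E; rewrite <- exp_plus; f_equal; ring).
    replace (- eps * (t - 0)) with (- eps * t) by ring.
    pose proof (exp_pos (- eps * t)). nra.
Qed.

Definition normal_gap (sigma : R) : R := normal_pdf sigma 0 1 - normal_pdf sigma 0 2.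

Lemma normal_gap_pos sigma : 0 < sigma -> 0 < normal_gap sigma.
Proof.
  intros Hs. unfold normal_gap, normal_pdf, Rdiv. pose proof sqrt_2PI_pos.
  apply Rlt_0_minus, Rmult_lt_compat_r; [apply Rinv_0_lt_compat, Rmult_lt_0_compat; auto|].
  apply exp_increasing, Rmult_lt_compat_r; [apply Rinv_0_lt_compat; nra | lra].
Qed.

Lemma gauss_pdf_false_sub_true_ge sigma s : 0 < sigma -> -2 <= s <= -1 ->
  normal_gap sigma <= gauss_pdf sigma false s - gauss_pdf sigma true s.
Proof.
  intros Hs Hs0. unfold normal_gap.
  pose proof (normal_pdf_le_dist sigma (-1) s 0 1 Hs ltac:(nra)).
  pose proof (normal_pdf_le_dist sigma 0 2 1 s Hs ltac:(nra)).
  change (gauss_pdf sigma false s) with (normal_pdf sigma (-1) s).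
  change (gauss_pdf sigma true s) with (normal_pdf sigma 1 s). lra.
Qed.

(* The integrand [(g_false - g_true) (k - k 0)] is nonnegative because both factors
   change sign at [s = 0]; on [[-2, -1]] it is bounded below. *)
Lemma report_prob_false_gap sigma eps l : 0 < sigma -> 0 < eps ->
  normal_gap sigma * (/ 2 * (1 - exp (- eps)) * exp (- eps * Rabs (thr sigma l))) <=
  report_prob sigma eps l false false - report_prob sigma eps l true false.
Proof.
  intros Hs He.
  pose proof (Rlt_le _ _ He) as He'.
  pose proof (report_kernel_false_antitone sigma eps l) as Hk.
  assert (HF : is_RInt_line
    (fun s => (gauss_pdf sigma false s - gauss_pdf sigma true s)
              * (report_kernel sigma eps l false s - report_kernel sigma eps l false 0))
    (report_prob sigma eps l false false - report_prob sigma eps l true false)).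
  { assert (Hn := fun theta => is_RInt_line_scal (report_kernel sigma eps l false 0) _ _
                                 (is_RInt_line_normal_pdf sigma (sgn theta) Hs)).
    pose proof (is_RInt_line_plus _ _ _ _
      (is_RInt_line_minus _ _ _ _
         (is_RInt_line_minus _ _ _ _ (is_RInt_line_report sigma eps l false false Hs He')
                                      (is_RInt_line_report sigma eps l true false Hs He'))
         (Hn false))
      (Hn true)) as H.
    replace (_ - _ - _ * 1 + _ * 1)
      with (report_prob sigma eps l false false - report_prob sigma eps l true false) in H by ring.
    eapply is_RInt_line_ext; [|exact H]. intros s. rewrite !gauss_pdf_normal_pdf. simpl. ring. }
  replace (normal_gap sigma * _) with
    (normal_gap sigma * (/ 2 * (1 - exp (- eps)) * exp (- eps * Rabs (thr sigma l))) * (-1 - -2))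
    by ring.
  pose proof (normal_gap_pos sigma Hs).
  pose proof (report_kernel_false_gap sigma eps l He).
  refine (is_RInt_line_ge_on_interval _ _ (-2) (-1) _ _ _ _ HF); [lra | |].
  - intros s.
    pose proof (normal_pdf_le_dist sigma (-1) s 1 s Hs).
    pose proof (normal_pdf_le_dist sigma 1 s (-1) s Hs).
    change (gauss_pdf sigma false s) with (normal_pdf sigma (-1) s).
    change (gauss_pdf sigma true s) with (normal_pdf sigma 1 s).
    destruct (Rle_dec s 0) as [Hs0 | Hs0].
    + pose proof (Hk s 0 He' Hs0). apply Rmult_le_pos; nra.
    + pose proof (Hk 0 s He' ltac:(lra)). nra.
  - intros s Hs0.
    pose proof (gauss_pdf_false_sub_true_ge sigma s Hs ltac:(lra)).
    pose proof (Hk s (-1) He' ltac:(lra)).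
    pose proof (exp_le_1 (- eps) ltac:(lra)). pose proof (exp_pos (- eps * Rabs (thr sigma l))).
    apply Rmult_le_compat; try lra. apply Rmult_le_pos; lra.
Qed.

Definition bhattacharyya (sigma eps l : R) (x : bool) : R :=
  sqrt (report_prob sigma eps l true x * report_prob sigma eps l false x).

Definition informativeness (sigma eps l : R) : R := exp (- (2 * eps) * Rabs (thr sigma l)).

Definition informativeness_const (sigma eps : R) : R :=
  (normal_gap sigma * (/ 2 * (1 - exp (- eps)))) ^ 2 / 8.

Lemma informativeness_const_pos sigma eps : 0 < sigma -> 0 < eps ->
  0 < informativeness_const sigma eps.
Proof.
  intros Hs He. unfold informativeness_const. pose proof (normal_gap_pos sigma Hs).
  assert (exp (- eps) < 1) by (rewrite <- exp_0; apply exp_increasing; lra).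
  apply Rdiv_lt_0_compat; [|lra]. apply pow_lt, Rmult_lt_0_compat; lra.
Qed.

Lemma bhattacharyya_sum_le sigma eps l : 0 < sigma -> 0 < eps ->
  informativeness_const sigma eps * informativeness sigma eps l
  <= 1 - bhattacharyya sigma eps l true - bhattacharyya sigma eps l false.
Proof.
  intros Hs He. pose proof (Rlt_le _ _ He) as He'.
  pose proof (report_prob_true_false sigma eps l true Hs He').
  pose proof (report_prob_true_false sigma eps l false Hs He').
  pose proof (report_prob_pos sigma eps l true true Hs He').
  pose proof (report_prob_pos sigma eps l true false Hs He').
  pose proof (report_prob_pos sigma eps l false true Hs He').
  pose proof (report_prob_pos sigma eps l false false Hs He').
  pose proof (report_prob_false_gap sigma eps l Hs He) as Hgap.
  set (qa := report_prob sigma eps l true false) in *.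
  set (qb := report_prob sigma eps l false false) in *.
  pose proof (binary_bhattacharyya_le qa qb ltac:(lra) ltac:(lra)) as Hb.
  unfold bhattacharyya. fold qa qb.
  replace (report_prob sigma eps l true true) with (1 - qa) by lra.
  replace (report_prob sigma eps l false true) with (1 - qb) by lra.
  set (a := normal_gap sigma * (/ 2 * (1 - exp (- eps)) * exp (- eps * Rabs (thr sigma l)))) in *.
  assert (Ha : 0 <= a).
  { unfold a. pose proof (normal_gap_pos sigma Hs). pose proof (exp_le_1 (- eps) ltac:(lra)).
    pose proof (exp_pos (- eps * Rabs (thr sigma l))).
    apply Rmult_le_pos; [|apply Rmult_le_pos]; lra. }
  assert (Hsq : a ^ 2 <= (qb - qa) ^ 2) by (apply pow_incr; lra).
  replace (informativeness_const sigma eps * informativeness sigma eps l) with (a ^ 2 / 8).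
  - lra.
  - unfold a, informativeness_const, informativeness.
    replace (- (2 * eps) * Rabs (thr sigma l))
      with (- eps * Rabs (thr sigma l) + - eps * Rabs (thr sigma l)) by ring.
    rewrite exp_plus. field.
Qed.

Lemma weighted_error_S sigma eps k l : 0 < sigma -> 0 <= eps ->
  weighted_error sigma eps (S k) l =
  bhattacharyya sigma eps l true * weighted_error sigma eps k (llr_update sigma eps l true)
  + bhattacharyya sigma eps l false * weighted_error sigma eps k (llr_update sigma eps l false).
Proof.
  intros Hs He. unfold weighted_error, bhattacharyya. simpl correct_after. unfold llr_update.
  destruct (exp_half_llr_update (report_prob sigma eps l true true)
              (report_prob sigma eps l false true) l) as [Ht1 Ht2]; try now apply report_prob_pos.
  destruct (exp_half_llr_update (report_prob sigma eps l true false)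
              (report_prob sigma eps l false false) l) as [Hf1 Hf2]; try now apply report_prob_pos.
  rewrite !mul_one_sub_convex by now apply report_prob_true_false.
  rewrite Ht1, Ht2, Hf1, Hf2. ring.
Qed.

Lemma weighted_error_kernel_iter sigma eps k l : 0 < sigma -> 0 <= eps ->
  weighted_error sigma eps k l =
  kernel_iter (bhattacharyya sigma eps) (llr_update sigma eps) (weighted_error sigma eps 0) k l.
Proof.
  intros Hs He. revert l. induction k as [|k IH]; intros l; [reflexivity|].
  rewrite weighted_error_S by auto. simpl. now rewrite !IH.
Qed.

Lemma informativeness_eq sigma eps l :
  informativeness sigma eps l = exp (- (eps * sigma ^ 2) * Rabs l).
Proof.
  unfold informativeness, thr. f_equal.
  replace (- sigma ^ 2 * l / 2) with (- (sigma ^ 2 / 2) * l) by field.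
  rewrite Rabs_mult, Rabs_Ropp, (Rabs_right (sigma ^ 2 / 2)) by (apply Rle_ge; nra). field.
Qed.

Lemma weighted_error_0_le_eps sigma eps d : 0 < sigma -> 0 <= eps -> 0 < d ->
  exists C, forall l, weighted_error sigma eps 0 l <= d + C * informativeness sigma eps l.
Proof.
  intros Hs He Hd.
  destruct (exp_le_eps_plus_slower (/ 2) (eps * sigma ^ 2) (d / 2)) as [C HC];
    [lra | nra | lra |].
  exists (2 * C). intros l. rewrite informativeness_eq.
  eapply Rle_trans; [now apply weighted_error_0_le|].
  replace (- Rabs l / 2) with (- / 2 * Rabs l) by field.
  pose proof (HC (Rabs l) (Rabs_pos l)). lra.
Qed.

Lemma is_lim_seq_weighted_error sigma eps : 0 < sigma -> 0 < eps ->
  is_lim_seq (fun k => weighted_error sigma eps k 0) 0.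
Proof.
  intros Hs He. pose proof (Rlt_le _ _ He) as He'.
  assert (Hw : forall l x, 0 <= bhattacharyya sigma eps l x) by (intros; apply sqrt_pos).
  pose proof (informativeness_const_pos sigma eps Hs He) as Hc.
  assert (Hphi : forall l, 0 <= informativeness sigma eps l) by (intros; apply Rlt_le, exp_pos).
  pose proof (fun l => bhattacharyya_sum_le sigma eps l Hs He) as Hdefect.
  apply (is_lim_seq_0_le_eps_plus _
           (fun k => kernel_iter (bhattacharyya sigma eps) (llr_update sigma eps)
                       (informativeness sigma eps) k 0)).
  - intros k. now apply weighted_error_ge0.
  - intros d Hd. destruct (weighted_error_0_le_eps sigma eps d Hs He' Hd) as [C HC].
    exists C. intros k. rewrite weighted_error_kernel_iter by auto.
    eapply Rle_trans;
      [apply (kernel_iter_le _ _ Hw _ (fun l => d * 1 + C * informativeness sigma eps l));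
       intros l; rewrite Rmult_1_r; apply HC|].
    rewrite kernel_iter_lin.
    pose proof (kernel_iter_one_bounds _ (llr_update sigma eps) Hw _ _ Hc Hphi Hdefect k 0). nra.
  - exact (is_lim_seq_kernel_iter _ (llr_update sigma eps) Hw _ _ Hc Hphi Hdefect 0).
Qed.

Lemma prob_correct_S sigma eps k :
  prob_correct sigma eps (S k) = 1 - / 2 * weighted_error sigma eps k 0.
Proof.
  unfold prob_correct, weighted_error. replace (S k - 1)%nat with k by lia.
  rewrite Ropp_0, Rdiv_0_l, exp_0. field.
Qed.

Theorem theorem5 (sigma eps : R) (Hsigma : 0 < sigma) (Heps : 0 < eps) :
  is_lim_seq (fun n : nat => prob_correct sigma eps n) 1.
Proof.
  apply is_lim_seq_incr_1.
  apply (is_lim_seq_ext (fun k => 1 - / 2 * weighted_error sigma eps k 0));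
    [intros k; symmetry; apply prob_correct_S|].
  replace (Finite 1) with (Finite (1 - / 2 * 0)) by (f_equal; ring).
  apply is_lim_seq_minus'; [apply is_lim_seq_const|].
  apply (is_lim_seq_scal_l _ (/ 2) 0), is_lim_seq_weighted_error; assumption.
Qed.
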